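(* For every commutative ring $k$, the Turaev category $\mathcal{T}_k$ has equalizers and coequalizers.
   Context: Let $k$ be a commutative ring. A Turaev $k$-module is a pair $(X,M)$ with $X$ a set and $M=(M_x)_{x\in X}$ a family of $k$-modules. The Turaev category $\mathcal{T}_k$ has Turaev $k$-modules as objects; a morphism $(X,M)\to(Y,N)$ is a pair $(f,\varphi)$ with $f:Y\to X$ a function and $\varphi=(\varphi_y:M_{f(y)}\to N_y)_{y\in Y}$ a family of $k$-linear maps; composition is $(g,\psi)\circ(f,\varphi)=(f\circ g,(\psi_z\circ\varphi_{g(z)})_{z})$. *)

From HB Require Import structures.
From mathcomp Require Import all_boot all_algebra.
Set Implicit Arguments. Unset Strict Implicit. Unset Printing Implicit Defensive.
Import GRing.Theory.
Local Open Scope ring_scope.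

Record TuraevMod (k : comPzRingType) := TMod {
  tm_set : Type;
  tm_mod : tm_set -> lmodType k
}.
Arguments tm_set {k} t.
Arguments tm_mod {k} t x.

Record TuraevHom (k : comPzRingType) (A B : TuraevMod k) := THom {
  th_fun : tm_set B -> tm_set A;
  th_map : forall y : tm_set B, tm_mod A (th_fun y) -> tm_mod B y;
  th_lin : forall y : tm_set B, linear (@th_map y)
}.
Arguments THom {k A B}.
Arguments th_fun {k A B}.
Arguments th_map {k A B}.
Arguments th_lin {k A B}.

Definition tidmap (k : comPzRingType) (A : TuraevMod k) : TuraevHom A A :=
  @THom k A A (fun x => x) (fun x (m : tm_mod A x) => m)
    (fun x a u v => erefl).

Definition tcomp (k : comPzRingType) (A B C : TuraevMod k)
  (G : TuraevHom B C) (F : TuraevHom A B) : TuraevHom A C.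
Proof.
refine (@THom k A C (fun z => th_fun F (th_fun G z))
  (fun z m => th_map G z (th_map F (th_fun G z) m)) _).
move=> z a u v /=.
by rewrite (th_lin F) (th_lin G).
Defined.

Definition is_equalizer (k : comPzRingType) (A B : TuraevMod k)
  (F G : TuraevHom A B) (E : TuraevMod k) (e : TuraevHom E A) : Prop :=
  tcomp F e = tcomp G e /\
  forall (Z : TuraevMod k) (h : TuraevHom Z A), tcomp F h = tcomp G h ->
    exists u : TuraevHom Z E, tcomp e u = h /\
      forall u' : TuraevHom Z E, tcomp e u' = h -> u' = u.

Definition is_coequalizer (k : comPzRingType) (A B : TuraevMod k)
  (F G : TuraevHom A B) (Q : TuraevMod k) (q : TuraevHom B Q) : Prop :=
  tcomp q F = tcomp q G /\
  forall (Z : TuraevMod k) (h : TuraevHom B Z), tcomp h F = tcomp h G ->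
    exists u : TuraevHom Q Z, tcomp u q = h /\
      forall u' : TuraevHom Q Z, tcomp u' q = h -> u' = u.

(* Both limits are computed fibrewise over the dual limit of sets.  For
   (f, phi), (g, psi) : (X, M) -> (Y, N), the coequalizer lives over the
   equalizer {y | f y = g y} of f and g, with fibre N_y / im (phi_y - psi_y);
   the equalizer lives over the coequalizer X/~ of f and g (~ generated by
   f y ~ g y), and its fibre over a class c is the module of families
   (m_x)_(x in c) with phi_y m_(f y) = psi_y m_(g y).  The universal properties
   then reduce to those of sets, of quotient modules and of submodules of
   products; what remains is transporting module elements along equalities of
   indices. *)

From HB Require Import structures.
From mathcomp Require Import all_boot all_algebra.
From mathcomp Require Import boolp.
From Stdlib Require Import Relations.
Set Implicit Arguments. Unset Strict Implicit. Unset Printing Implicit Defensive.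
Import GRing.Theory.
Local Open Scope ring_scope.
Local Open Scope quotient_scope.

Section DependentProduct.
Variables (R : pzRingType) (I : Type) (M : I -> lmodType R).

Definition dprod := forall i, M i.
HB.instance Definition _ := Choice.on dprod.

Definition dprod_add (u v : dprod) : dprod := fun i => u i + v i.
Definition dprod_opp (u : dprod) : dprod := fun i => - u i.
Definition dprod_scale (a : R) (u : dprod) : dprod := fun i => a *: u i.

Local Notation dprod_ext := (@functional_extensionality_dep _ _ _ _).

Lemma dprod_addA : associative dprod_add.
Proof. by move=> u v w; apply: dprod_ext => i; exact: addrA. Qed.
Lemma dprod_addC : commutative dprod_add.
Proof. by move=> u v; apply: dprod_ext => i; exact: addrC. Qed.
Lemma dprod_add0 : left_id (fun=> 0) dprod_add.
Proof. by move=> u; apply: dprod_ext => i; exact: add0r. Qed.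
Lemma dprod_addN : left_inverse (fun=> 0) dprod_opp dprod_add.
Proof. by move=> u; apply: dprod_ext => i; exact: addNr. Qed.
HB.instance Definition _ :=
  GRing.isZmodule.Build dprod dprod_addA dprod_addC dprod_add0 dprod_addN.

Lemma dprod_scaleA a b u : dprod_scale a (dprod_scale b u) = dprod_scale (a * b) u.
Proof. by apply: dprod_ext => i; exact: scalerA. Qed.
Lemma dprod_scale1 : left_id 1 dprod_scale.
Proof. by move=> u; apply: dprod_ext => i; exact: scale1r. Qed.
Lemma dprod_scaleDr : right_distributive dprod_scale +%R.
Proof. by move=> a u v; apply: dprod_ext => i; exact: scalerDr. Qed.
Lemma dprod_scaleDl u : {morph dprod_scale^~ u : a b / a + b}.
Proof. by move=> a b; apply: dprod_ext => i; exact: scalerDl. Qed.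
HB.instance Definition _ := GRing.Zmodule_isLmodule.Build R dprod
  dprod_scaleA dprod_scale1 dprod_scaleDr dprod_scaleDl.

Lemma dprod0E i : (0 : dprod) i = 0.
Proof. by []. Qed.

Lemma dprod_linE a (u v : dprod) i : (a *: u + v) i = a *: u i + v i.
Proof. by []. Qed.
End DependentProduct.

Section QuotientModule.
Variables (R : pzRingType) (V : lmodType R) (S : zmodClosed V).

(* Indexed by the closure proof so that the module structure can be canonical. *)
Definition quotmod of GRing.scaler_closed S := @Quotient.quot V S.

Hypothesis scaler_closedS : GRing.scaler_closed S.
Local Notation Q := (quotmod scaler_closedS).
HB.instance Definition _ := ZmodQuotient.on Q.

Definition quot_scale (a : R) := lift_op1 Q ( *:%R a).

Lemma pi_scale a : {morph \pi_Q : x / a *: x >-> quot_scale a x}.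
Proof.
move=> x; unlock quot_scale; apply/eqP; rewrite piE Quotient.equivE.
by rewrite -scalerBr scaler_closedS // Quotient.idealrBE reprK.
Qed.
Canonical pi_scale_morph a := PiMorph1 (pi_scale a).

Lemma quot_scaleA a b q : quot_scale a (quot_scale b q) = quot_scale (a * b) q.
Proof. by rewrite -[q]reprK !piE scalerA. Qed.
Lemma quot_scale1 : left_id 1 quot_scale.
Proof. by move=> q; rewrite -[q]reprK !piE scale1r. Qed.
Lemma quot_scaleDr : right_distributive quot_scale +%R.
Proof. by move=> a p q; rewrite -[p]reprK -[q]reprK !piE scalerDr. Qed.
Lemma quot_scaleDl q : {morph quot_scale^~ q : a b / a + b}.
Proof. by move=> a b; rewrite -[q]reprK !piE scalerDl. Qed.
HB.instance Definition _ := GRing.Zmodule_isLmodule.Build R Q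
  quot_scaleA quot_scale1 quot_scaleDr quot_scaleDl.

Lemma pi_linear : linear (\pi_Q : V -> Q).
Proof. by move=> a x y; rewrite !piE. Qed.

Lemma eqmod_pi x y : x - y \in S -> \pi_Q x = \pi_Q y.
Proof. by move=> Sxy; apply/eqP; rewrite piE Quotient.equivE. Qed.

Section Lift.
Variables (W : lmodType R) (h : V -> W).
Hypotheses (h_linear : linear h) (h_kills : {in S, forall v, h v = 0}).

Definition quot_lift (q : Q) : W := h (repr q).

Lemma quot_liftE x : quot_lift (\pi_Q x) = h x.
Proof.
apply/eqP; rewrite -subr_eq0 -(zmod_morphism_linear h_linear) h_kills //.
by rewrite Quotient.idealrBE reprK.
Qed.

Lemma quot_lift_linear : linear quot_lift.
Proof.
by move=> a p q; rewrite -[p]reprK -[q]reprK -pi_linear !quot_liftE h_linear.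
Qed.
End Lift.
End QuotientModule.
Arguments quot_liftE {R V S scaler_closedS W h} h_linear h_kills x.
Arguments quot_lift_linear {R V S scaler_closedS W h} h_linear h_kills.

Section LinearImage.
Variables (R : pzRingType) (U V : lmodType R) (f : U -> V).
Hypothesis f_linear : linear f.

(* Indexed by the linearity proof so that its closure properties can be canonical. *)
Definition lin_image of linear f : {pred V} := fun v => `[< exists u, f u = v >].

Lemma lin_image_submod_closed : submod_closed (lin_image f_linear).
Proof.
split=> [|a _ _ /asboolP[u <-] /asboolP[u' <-]]; apply/asboolP.
  by exists 0; rewrite -(subrr 0) (zmod_morphism_linear f_linear) subrr.
by exists (a *: u + u'); rewrite f_linear.
Qed.

HB.instance Definition _ :=
  GRing.isSubmodClosed.Build R V (lin_image f_linear) lin_image_submod_closed.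

Lemma lin_image_scaler_closed : GRing.scaler_closed (lin_image f_linear).
Proof. by move=> a v fv; rewrite rpredZ. Qed.
End LinearImage.
Arguments lin_image_scaler_closed {R U V f} f_linear.

Section Transport.
Variables (R : pzRingType) (I : Type) (M : I -> lmodType R).

Definition transport (i j : I) (e : i = j) (x : M i) : M j :=
  eq_rect i (fun l => M l : Type) x j e.

Lemma transport_id i (e : i = i) x : transport e x = x.
Proof. by rewrite (Prop_irrelevance e erefl). Qed.

Lemma transport_trans i j l (e1 : i = j) (e2 : j = l) x :
  transport e2 (transport e1 x) = transport (etrans e1 e2) x.
Proof. by case: _ / e2. Qed.

Lemma transport_linear i j (e : i = j) : linear (transport e).
Proof. by case: _ / e. Qed.
HB.instance Definition _ i j (e : i = j) :=
  GRing.isLinear.Build R (M i) (M j) _ (transport e) (transport_linear e).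
End Transport.

Lemma transport_natural (R : pzRingType) (I : Type) (M N : I -> lmodType R)
    (p : forall i, M i -> N i) i j (e : i = j) (x : M i) :
  p j (transport e x) = transport e (p i x).
Proof. by case: _ / e. Qed.

Lemma transport_comp (R : pzRingType) (I J : Type) (M : J -> lmodType R)
    (s : I -> J) i j (e : i = j) (x : M (s i)) :
  transport (M := M \o s) e x = transport (f_equal s e) x.
Proof. by case: _ / e. Qed.

Section SetCoequalizer.
Variables (X Y : Type) (f g : Y -> X).

Definition set_coeq_step (a b : X) : Prop := exists y, a = f y /\ b = g y.

Definition set_coeq_rel (a b : {classic X}) : bool :=
  `[< clos_refl_sym_trans X set_coeq_step a b >].

Lemma set_coeq_rel_equiv : equiv_class_of set_coeq_rel.
Proof.
have [refl trans sym] := clos_rst_is_equiv X set_coeq_step.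
split=> [a|a b|b a c]; rewrite /set_coeq_rel.
- exact/asboolP/refl.
- by apply/asboolP/asboolP; apply: sym.
- by move=> /asboolP ab /asboolP bc; apply/asboolP; exact: trans ab bc.
Qed.
Canonical set_coeq_equiv := EquivRelPack set_coeq_rel_equiv.
Canonical set_coeq_encModRel := defaultEncModRel set_coeq_rel.

Definition set_coeq := {eq_quot set_coeq_rel}.
HB.instance Definition _ := Choice.on set_coeq.
HB.instance Definition _ : EqQuotient {classic X} set_coeq_rel set_coeq :=
  EqQuotient.on set_coeq.

Lemma set_coeq_glue y : \pi_set_coeq (f y) = \pi_set_coeq (g y).
Proof. by apply/eqquotP/asboolP; apply: rst_step; exists y. Qed.

Lemma set_coeq_factor (Z : Type) (h : X -> Z) :
  (forall y, h (f y) = h (g y)) ->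
  forall a b : X, \pi_set_coeq a = \pi_set_coeq b -> h a = h b.
Proof.
move=> hfg a b /eqquotP/asboolP.
elim=> [_ _ [y [-> ->]]|//|_ _ _ ->|_ _ _ _ -> _ ->] //.
Qed.
End SetCoequalizer.

Section TuraevBasics.
Variable k : comPzRingType.
Implicit Types A B : TuraevMod k.

HB.instance Definition _ A B (F : TuraevHom A B) y :=
  GRing.isLinear.Build k _ _ _ (th_map F y) (th_lin F y).

Lemma thom_ext A B (t1 t2 : TuraevHom A B) :
  (forall y, exists e : th_fun t1 y = th_fun t2 y,
     forall x, th_map t1 y x = th_map t2 y (transport e x)) -> t1 = t2.
Proof.
case: t1 t2 => [f1 m1 l1] [f2 m2 l2] /= ext.
have ef : f1 = f2.
  by apply: functional_extensionality_dep => y; have [] := ext y.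
subst f2; have em : m1 = m2.
  apply: functional_extensionality_dep => y; apply: funext => x.
  by have [e ->] := ext y; rewrite transport_id.
by subst m2; rewrite (Prop_irrelevance l1 l2).
Qed.

Lemma thom_fun_eq A B (t1 t2 : TuraevHom A B) : t1 = t2 -> th_fun t1 =1 th_fun t2.
Proof. by move=> ->. Qed.

Lemma thom_map_eq A B (t1 t2 : TuraevHom A B) : t1 = t2 ->
  forall y (e : th_fun t1 y = th_fun t2 y) x, th_map t1 y x = th_map t2 y (transport e x).
Proof. by move=> <- y e x; rewrite transport_id. Qed.
End TuraevBasics.

Section Coequalizer.
Variables (k : comPzRingType) (A B : TuraevMod k) (F G : TuraevHom A B).

Definition coeq_set := {y : tm_set B | th_fun F y = th_fun G y}.

Definition coeq_diff (w : coeq_set) (m : tm_mod A (th_fun F (sval w))) :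
    tm_mod B (sval w) :=
  th_map F (sval w) m - th_map G (sval w) (transport (svalP w) m).

Lemma coeq_diff_linear w : linear (@coeq_diff w).
Proof. by move=> a m m'; rewrite /coeq_diff !linearP scalerN scalerBr addrACA. Qed.
Arguments coeq_diff_linear : clear implicits.

Definition coeq_mod (w : coeq_set) : lmodType k :=
  quotmod (lin_image_scaler_closed (coeq_diff_linear w)).

Definition coeq_obj : TuraevMod k := TMod coeq_mod.

Definition coeq_proj : TuraevHom B coeq_obj :=
  @THom _ B coeq_obj sval (fun w => \pi_(coeq_mod w)) (fun w => pi_linear _).

Lemma coeq_proj_glue : tcomp coeq_proj F = tcomp coeq_proj G.
Proof.
apply: thom_ext => w; exists (svalP w) => m /=.
by apply: eqmod_pi; apply/asboolP; exists m.
Qed.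

Section Factor.
Variables (Z : TuraevMod k) (h : TuraevHom B Z).
Hypothesis hFG : tcomp h F = tcomp h G.

Definition coeq_factor_fun (z : tm_set Z) : coeq_set :=
  exist _ (th_fun h z) (thom_fun_eq hFG z).

Lemma coeq_factor_kills z :
  {in lin_image (coeq_diff_linear (coeq_factor_fun z)), forall n, th_map h z n = 0}.
Proof.
move=> _ /asboolP[m <-]; rewrite /coeq_diff linearB /=.
by have /= -> := thom_map_eq hFG (svalP (coeq_factor_fun z)) m; rewrite subrr.
Qed.

Definition coeq_factor : TuraevHom coeq_obj Z :=
  @THom _ coeq_obj Z coeq_factor_fun (fun z => quot_lift (th_map h z))
    (fun z => quot_lift_linear (th_lin h z) (@coeq_factor_kills z)).

Lemma coeq_factorK : tcomp coeq_factor coeq_proj = h.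
Proof.
apply: thom_ext => z; exists erefl => n /=.
by rewrite (quot_liftE (th_lin h z) (@coeq_factor_kills z)).
Qed.

Lemma coeq_factor_unique (u : TuraevHom coeq_obj Z) :
  tcomp u coeq_proj = h -> u = coeq_factor.
Proof.
move=> uK.
have e z : th_fun u z = coeq_factor_fun z.
  apply: (eq_sig_hprop (fun y => @Prop_irrelevance (th_fun F y = th_fun G y))).
  exact: thom_fun_eq uK z.
apply: thom_ext => z; exists (e z) => q /=.
rewrite -[q]reprK -(transport_natural (fun w : coeq_set => \pi_(coeq_mod w))) transport_comp.
rewrite (quot_liftE (th_lin h z) (@coeq_factor_kills z)).
by have /= -> := thom_map_eq uK (f_equal sval (e z)) (repr q).
Qed.
End Factor.

Lemma coeq_proj_is_coequalizer : is_coequalizer F G coeq_proj.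
Proof.
split=> [|Z h hFG]; first exact: coeq_proj_glue.
by exists (coeq_factor hFG); split; [exact: coeq_factorK | exact: coeq_factor_unique].
Qed.
End Coequalizer.

Section Equalizer.
Variables (k : comPzRingType) (A B : TuraevMod k) (F G : TuraevHom A B).

Definition eq_set := set_coeq (th_fun F) (th_fun G).

Definition eq_fiber (c : eq_set) := {x : tm_set A | \pi_eq_set x = c}.

Definition eq_fam (c : eq_set) (i : eq_fiber c) : lmodType k := tm_mod A (sval i).

Definition eq_compatible (c : eq_set) : {pred dprod (@eq_fam c)} := fun m =>
  `[< forall y (p : \pi_eq_set (th_fun F y) = c) (q : \pi_eq_set (th_fun G y) = c),
       th_map F y (m (exist _ _ p)) = th_map G y (m (exist _ _ q)) >].
Arguments eq_compatible : clear implicits.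

Lemma eq_compatible_submod_closed c : submod_closed (eq_compatible c).
Proof.
split=> [|a m m' /asboolP Hm /asboolP Hm']; apply/asboolP=> y p q /=.
  by rewrite !dprod0E !linear0.
by rewrite !dprod_linE (th_lin F) (th_lin G) Hm Hm'.
Qed.
HB.instance Definition _ c :=
  GRing.isSubmodClosed.Build k _ (eq_compatible c) (eq_compatible_submod_closed c).

Record eq_mod (c : eq_set) :=
  EqMod { eq_val : dprod (@eq_fam c); _ : eq_val \in eq_compatible c }.
HB.instance Definition _ c := [isSub for @eq_val c].
HB.instance Definition _ c := [Choice of eq_mod c by <:].
HB.instance Definition _ c := [SubChoice_isSubLmodule of eq_mod c by <:].

Definition eq_obj : TuraevMod k := TMod eq_mod.

Lemma eq_val_linear c i : linear (fun m : eq_mod c => eq_val m i).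
Proof. by []. Qed.

Definition eq_incl : TuraevHom eq_obj A :=
  @THom _ eq_obj A (fun x => \pi_eq_set x) (fun x m => eq_val m (exist _ x erefl))
    (fun x => @eq_val_linear (\pi_eq_set x) (exist _ x erefl)).

Lemma eq_val_transport c1 c2 (e : c1 = c2) (m : eq_mod c1) x p1 p2 :
  eq_val (transport (M := eq_mod) e m) (exist _ x p2) = eq_val m (exist _ x p1).
Proof. by case: _ / e in p2 *; rewrite (Prop_irrelevance p1 p2). Qed.

Lemma eq_incl_glue : tcomp F eq_incl = tcomp G eq_incl.
Proof.
apply: thom_ext => y; exists (set_coeq_glue _ _ y) => m /=.
rewrite (eq_val_transport _ _ (esym (set_coeq_glue _ _ y))).
exact: (asboolP _ (valP m)).
Qed.

Section Factor.
Variables (Z : TuraevMod k) (h : TuraevHom Z A).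
Hypothesis hFG : tcomp F h = tcomp G h.

Let h_glue y : th_fun h (th_fun F y) = th_fun h (th_fun G y).
Proof. exact: thom_fun_eq hFG y. Qed.

Definition eq_factor_fun (c : eq_set) : tm_set Z := th_fun h (repr c).

Lemma eq_factor_fun_fiber c (i : eq_fiber c) : eq_factor_fun c = th_fun h (sval i).
Proof. by apply: (set_coeq_factor h_glue); rewrite reprK (svalP i). Qed.

Definition eq_factor_fam c (r : tm_mod Z (eq_factor_fun c)) : dprod (@eq_fam c) :=
  fun i => th_map h (sval i) (transport (eq_factor_fun_fiber i) r).

Lemma eq_factor_fam_compatible c r : eq_factor_fam r \in eq_compatible c.
Proof.
apply/asboolP => y p q /=; rewrite /eq_factor_fam /=.
have /= -> := thom_map_eq hFG (thom_fun_eq hFG y).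
by rewrite transport_trans; congr (th_map G y (th_map h _ (transport _ r))).
Qed.

Definition eq_factor_map c (r : tm_mod Z (eq_factor_fun c)) : eq_mod c :=
  EqMod (eq_factor_fam_compatible r).

Lemma eq_factor_map_linear c : linear (@eq_factor_map c).
Proof.
move=> a r r'; apply: val_inj; apply: functional_extensionality_dep => i /=.
by rewrite /eq_factor_fam !linearP.
Qed.

Definition eq_factor : TuraevHom Z eq_obj :=
  @THom _ Z eq_obj eq_factor_fun eq_factor_map eq_factor_map_linear.

Lemma eq_factorK : tcomp eq_incl eq_factor = h.
Proof.
by apply: thom_ext => x; exists (eq_factor_fun_fiber (exist _ x erefl)).
Qed.

Lemma eq_factor_unique u : tcomp eq_incl u = h -> u = eq_factor.
Proof.
move=> uK; apply: thom_ext => c.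
have e : th_fun u c = eq_factor_fun c.
  by rewrite /eq_factor_fun -(thom_fun_eq uK (repr c)) /= reprK.
exists e => r; apply: val_inj; apply: functional_extensionality_dep => -[x p] /=.
case: _ / p in e r *; rewrite /eq_factor_fam /= transport_trans.
by have /= -> := thom_map_eq uK (etrans e (eq_factor_fun_fiber (exist _ x erefl))) r.
Qed.
End Factor.

Lemma eq_incl_is_equalizer : is_equalizer F G eq_incl.
Proof.
split=> [|Z h hFG]; first exact: eq_incl_glue.
by exists (eq_factor hFG); split; [exact: eq_factorK | exact: eq_factor_unique].
Qed.
End Equalizer.

Theorem proposition2p6 (k : comPzRingType) :
  (forall (A B : TuraevMod k) (F G : TuraevHom A B),
     exists (E : TuraevMod k) (e : TuraevHom E A), is_equalizer F G e) /\
  (forall (A B : TuraevMod k) (F G : TuraevHom A B),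
     exists (Q : TuraevMod k) (q : TuraevHom B Q), is_coequalizer F G q).
Proof.
split=> A B F G.
  by exists (eq_obj F G), (eq_incl F G); exact: eq_incl_is_equalizer.
by exists (coeq_obj F G), (coeq_proj F G); exact: coeq_proj_is_coequalizer.
Qed.
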